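(* For the interval algorithm $\phi_{\mathrm{int}}$ generating $Y^n$ from the coin process $\mathbf X$, with stopping time $T$, for every integer $m\ge0$ and all real numbers $\lambda,\tau\ge0$, \[ \Pr(T>m)\ \le\ P_{X^m}(\mathcal S_m^c(\lambda)) + P_{Y^n}(\mathcal T_n^c(\tau)) + 2^{-\lambda+\tau+1}, \] where $\mathcal S_m(\lambda)=\{x^m\in\mathcal X^m:\log\frac{1}{P_{X^m}(x^m)}\ge\lambda\}$ and $\mathcal T_n(\tau)=\{y^n\in\mathcal Y^n:\log\frac{1}{P_{Y^n}(y^n)}\le\tau\}$, and complements are in $\mathcal X^m$, $\mathcal Y^n$.
   Context: Logarithms are base 2. $\mathcal X=\{1,\dots,M\}$, $\mathcal Y=\{1,\dots,N\}$ are finite sets; the coin process $\mathbf X=\{X^m\}_{m\ge1}$ on $\mathcal X$ and target process $\mathbf Y=\{Y^n\}_{n\ge1}$ on $\mathcal Y$ are arbitrary processes given by consistent families of distributions $P_{X^m}$, $P_{Y^n}$. Interval algorithm: for a finite sequence $s\in\mathcal X^i$ define an interval $\mathcal I_s=[\underline\alpha_s,\overline\alpha_s)\subseteq[0,1)$ recursively by $\mathcal I_{\bot}=[0,1)$ for the empty sequence and, for $x\in\mathcal X$, $\underline\alpha_{sx}=\underline\alpha_s+(\overline\alpha_s-\underline\alpha_s)\sum_{k=1}^{x-1}P_{X_{i+1}|X^i}(k|s)$, $\overline\alpha_{sx}=\underline\alpha_s+(\overline\alpha_s-\underline\alpha_s)\sum_{k=1}^{x}P_{X_{i+1}|X^i}(k|s)$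 (conditional probabilities given a probability-zero prefix may be chosen arbitrarily); thus $|\mathcal I_s|=P_{X^i}(s)$. Define $\mathcal J_t=[\underline\beta_t,\overline\beta_t)$ for $t\in\mathcal Y^j$ in the same way from the conditional distributions $P_{Y_{j+1}|Y^j}$, so $|\mathcal J_t|=P_{Y^j}(t)$ and $\{\mathcal J_{y^n}\}_{y^n\in\mathcal Y^n}$ partitions $[0,1)$. The interval algorithm observes $X_1,X_2,\dots$ and stops at the first time $m$ such that $\mathcal I_{X^m}\subseteq\mathcal J_{y^n}$ for some $y^n\in\mathcal Y^n$, outputting that $y^n$ (for $P_{X^m}(X^m)>0$ this $y^n$ is unique; it may be run sequentially, outputting $y_j$ as soon as $\mathcal I_{X^i}\subseteq\mathcal J_{y^j}$, with the same stopping time and output). Its stopping time $T$ is this first time ($T=\infty$ if it never happens); $\phi_{\mathrm{int}}(x^m)$ denotes the output if the algorithm has stopped after reading $x^m$, and $\bot$ otherwise. *)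

From Stdlib Require Import Reals List Classical ClassicalEpsilon.
Import ListNotations.
Open Scope R_scope.

Definition in_alph (K : nat) (s : list nat) : Prop :=
  forall x, In x s -> (1 <= x <= K)%nat.

Fixpoint words (K m : nat) : list (list nat) :=
  match m with
  | O => [ [] ]
  | S m' => flat_map (fun w => map (fun x => w ++ [x]) (seq 1 K)) (words K m')
  end.

Definition sumR (l : list R) : R := fold_right Rplus 0 l.

(* A conditional kernel c s k = P_{X_{i+1}|X^i}(k|s) is a probability
   distribution on {1..K} for every admissible prefix s, and the joint
   distributions P satisfy the chain rule with respect to it
   (for prefixes of probability zero, c s is arbitrary). *)
Definition process (K : nat) (P : list nat -> R) (c : list nat -> nat -> R) : Prop :=
  P [] = 1 /\
  forall s, in_alph K s ->
    (forall k, (1 <= k <= K)%nat -> 0 <= c s k) /\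
    sumR (map (c s) (seq 1 K)) = 1 /\
    (forall k, (1 <= k <= K)%nat -> P (s ++ [k]) = P s * c s k).

Definition cumlow (c : list nat -> nat -> R) (s : list nat) (x : nat) : R :=
  sumR (map (c s) (seq 1 (x - 1))).
Definition cumhigh (c : list nat -> nat -> R) (s : list nat) (x : nat) : R :=
  sumR (map (c s) (seq 1 x)).

(* Interval [lo, hi) for the sequence pre ++ rest, starting from the
   interval (lo, hi) of pre. *)
Fixpoint intv_aux (c : list nat -> nat -> R) (pre rest : list nat) (lo hi : R)
  : R * R :=
  match rest with
  | [] => (lo, hi)
  | x :: r =>
      intv_aux c (pre ++ [x]) r
        (lo + (hi - lo) * cumlow c pre x)
        (lo + (hi - lo) * cumhigh c pre x)
  end.

Definition interval (c : list nat -> nat -> R) (s : list nat) : R * R :=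
  intv_aux c [] s 0 1.

Definition subint (I J : R * R) : Prop :=
  forall r, fst I <= r < snd I -> fst J <= r < snd J.

Definition stopped (cX cY : list nat -> nat -> R) (N n : nat) (xm : list nat) : Prop :=
  exists i, (i <= length xm)%nat /\
    exists yn, In yn (words N n) /\ subint (interval cX (firstn i xm)) (interval cY yn).

Definition prob (K m : nat) (P : list nat -> R) (E : list nat -> Prop) : R :=
  sumR (map (fun w => if excluded_middle_informative (E w) then P w else 0)
            (words K m)).

Definition log2 (x : R) : R := ln x / ln 2.

(* S_m(λ) = {x^m : log(1/P(x^m)) >= λ}, with log(1/0) = +∞. *)
Definition S_set (PX : list nat -> R) (lam : R) (xm : list nat) : Prop :=
  PX xm = 0 \/ log2 (1 / PX xm) >= lam.

Definition T_set (PY : list nat -> R) (tau : R) (yn : list nat) : Prop :=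
  0 < PY yn /\ log2 (1 / PY yn) <= tau.

(* The intervals I_{x^m}, x^m ranging over X^m, tile [0,1) and |I_{x^m}| =
   P_{X^m}(x^m); likewise the intervals J_{y^n} tile [0,1).  If the algorithm
   has not stopped after x^m, then I_{x^m} lies inside no J_{y^n}.  Apart from
   the sequences outside S_m(lambda), every such x^m is "short and unstopped":
   |I_{x^m}| <= eps := 2^-lambda and I_{x^m} is contained in no J_{y^n}.  We
   distribute the length of each short unstopped interval over the J_{y^n}
   according to overlaps.  For a fixed y^n the total overlap is at most
   |J_{y^n}| = P_{Y^n}(y^n), which is used when y^n lies outside T_n(tau); it
   is also at most 2 eps, because an interval not contained in J_{y^n} but
   meeting it must contain an endpoint of J_{y^n} in its interior, and each
   endpoint is interior to at most one tile.  For y^n in T_n(tau) we have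
   2 eps <= 2 eps 2^tau P_{Y^n}(y^n), and summing over y^n gives the bound. *)

From Stdlib Require Import Reals List Lra Lia Classical ClassicalEpsilon.
Import ListNotations.
Open Scope R_scope.

Ltac split_minmax := unfold Rmax, Rmin; repeat match goal with
  | |- context[Rle_dec ?a ?b] => destruct (Rle_dec a b)
  | H : context[Rle_dec ?a ?b] |- _ => destruct (Rle_dec a b) end.

Definition ind (P : Prop) : R := if excluded_middle_informative P then 1 else 0.

Lemma ind_bounds (P : Prop) : 0 <= ind P <= 1.
Proof. unfold ind; destruct excluded_middle_informative; lra. Qed.

Lemma ind_true (P : Prop) : P -> ind P = 1.
Proof. unfold ind; destruct excluded_middle_informative; tauto. Qed.

Lemma sumR_app (l1 l2 : list R) : sumR (l1 ++ l2) = sumR l1 + sumR l2.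
Proof. induction l1; simpl; [ring | rewrite IHl1; ring]. Qed.

Lemma sumR_plus {A} (f g : A -> R) (l : list A) :
  sumR (map (fun x => f x + g x) l) = sumR (map f l) + sumR (map g l).
Proof. induction l; simpl; [ring | rewrite IHl; ring]. Qed.

Lemma sumR_scal {A} (k : R) (f : A -> R) (l : list A) :
  sumR (map (fun x => k * f x) l) = k * sumR (map f l).
Proof. induction l; simpl; [ring | rewrite IHl; ring]. Qed.

Lemma sumR_le {A} (f g : A -> R) (l : list A) :
  (forall x, In x l -> f x <= g x) -> sumR (map f l) <= sumR (map g l).
Proof.
  induction l as [|a l IH]; simpl; intros H; [lra|].
  pose proof (H a (or_introl eq_refl)).
  pose proof (IH (fun x Hx => H x (or_intror Hx))). lra.
Qed.

Lemma sumR_ext {A} (f g : A -> R) (l : list A) :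
  (forall x, In x l -> f x = g x) -> sumR (map f l) = sumR (map g l).
Proof. intros H; f_equal; apply map_ext_in; auto. Qed.

Lemma sumR_swap {A B} (F : A -> B -> R) (l1 : list A) (l2 : list B) :
  sumR (map (fun x => sumR (map (fun y => F x y) l2)) l1)
  = sumR (map (fun y => sumR (map (fun x => F x y) l1)) l2).
Proof.
  induction l1 as [|a l1 IH]; simpl.
  - induction l2; simpl; [reflexivity | rewrite <- IHl2; ring].
  - rewrite IH, <- sumR_plus. reflexivity.
Qed.

(* [tiles l a b]: the intervals of [l], read as half-open [lo, hi), are
   consecutive and partition [a, b). *)
Fixpoint tiles (l : list (R * R)) (a b : R) : Prop :=
  match l with
  | [] => a = b
  | p :: r => fst p = a /\ fst p <= snd p /\ tiles r (snd p) b
  end.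

Definition lenI (p : R * R) : R := snd p - fst p.

Lemma tiles_le (l : list (R * R)) (a b : R) : tiles l a b -> a <= b.
Proof.
  revert a; induction l as [|p r IH]; simpl; intros a H; [lra|].
  destruct H as [H1 [H2 H3]]. apply IH in H3. lra.
Qed.

Lemma tiles_in (l : list (R * R)) (a b : R) (p : R * R) :
  tiles l a b -> In p l -> a <= fst p /\ fst p <= snd p /\ snd p <= b.
Proof.
  revert a; induction l as [|q r IH]; simpl; intros a H Hin; [contradiction|].
  destruct H as [H1 [H2 H3]]. pose proof (tiles_le _ _ _ H3).
  destruct Hin as [<-|Hin]; [lra|].
  destruct (IH _ H3 Hin) as [? [? ?]]. lra.
Qed.

Lemma tiles_sum (l : list (R * R)) (a b : R) :
  tiles l a b -> sumR (map lenI l) = b - a.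
Proof.
  revert a; induction l as [|p r IH]; simpl; intros a H; [lra|].
  destruct H as [H1 [H2 H3]]. rewrite (IH _ H3). unfold lenI. lra.
Qed.

Lemma tiles_flat {A} (F : A -> R * R) (G : A -> list (R * R)) (ws : list A) (a b : R) :
  tiles (map F ws) a b ->
  (forall w, In w ws -> tiles (G w) (fst (F w)) (snd (F w))) ->
  tiles (flat_map G ws) a b.
Proof.
  assert (app_tiles : forall l1 l2 a b c,
             tiles l1 a b -> tiles l2 b c -> tiles (l1 ++ l2) a c).
  { induction l1 as [|p r IH]; simpl; intros l2 a0 b0 c H1 H2; [subst; auto|].
    destruct H1 as [? [? ?]]. repeat split; eauto. }
  revert a; induction ws as [|w ws IH]; simpl; intros a H HG; [exact H|].
  destruct H as [H1 [H2 H3]]. apply app_tiles with (snd (F w)).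
  - rewrite <- H1. apply HG; auto.
  - apply IH; auto.
Qed.

Definition ov (I J : R * R) : R :=
  Rmax 0 (Rmin (snd I) (snd J) - Rmax (fst I) (fst J)).

Lemma ov_sym (I J : R * R) : ov I J = ov J I.
Proof. unfold ov; split_minmax; lra. Qed.

Lemma ov_ge0 (I J : R * R) : 0 <= ov I J.
Proof. unfold ov; apply Rmax_l. Qed.

Lemma ov_sum (l : list (R * R)) (a0 b0 : R) (I : R * R) :
  tiles l a0 b0 -> a0 <= fst I -> fst I <= snd I -> snd I <= b0 ->
  sumR (map (ov I) l) = lenI I.
Proof.
  assert (beyond : forall a b l d b0, tiles l d b0 -> b <= d ->
                     sumR (map (ov (a, b)) l) = 0).
  { intros a b; induction l0 as [|[c e] r IH]; simpl; intros d b1 H Hb; [reflexivity|].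
    destruct H as [H1 [H2 H3]]. simpl in *. rewrite (IH e b1 H3) by lra.
    unfold ov; simpl; split_minmax; lra. }
  destruct I as [a b]; unfold lenI; simpl.
  revert a0 a; induction l as [|[c d] r IH]; simpl; intros a0 a H Ha Hab Hb; [lra|].
  destruct H as [H1 [H2 H3]]. simpl in *.
  destruct (Rle_dec b d) as [Hbd|Hbd].
  - rewrite (beyond a b r d b0 H3 Hbd). unfold ov; simpl; split_minmax; lra.
  - destruct (Rle_dec d a) as [Hda|Hda].
    + rewrite (IH d a H3) by lra. unfold ov; simpl; split_minmax; lra.
    + assert (E : sumR (map (ov (a, b)) r) = sumR (map (ov (d, b)) r)).
      { apply sumR_ext. intros p Hp. destruct (tiles_in _ _ _ p H3 Hp) as [? [? ?]].
        unfold ov; simpl; split_minmax; lra. }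
      rewrite E, (IH d d H3) by lra. unfold ov; simpl; split_minmax; lra.
Qed.

Definition inside (t : R) (p : R * R) : R := ind (fst p < t < snd p).

Lemma inside_le1 (l : list (R * R)) (a b t : R) :
  tiles l a b -> sumR (map (inside t) l) <= 1.
Proof.
  assert (before : forall l a b, tiles l a b -> t <= a -> sumR (map (inside t) l) = 0).
  { induction l0 as [|[c d] r IH]; simpl; intros a0 b0 H Ht; [reflexivity|].
    destruct H as [H1 [H2 H3]]; simpl in *. rewrite (IH d b0 H3) by lra.
    unfold inside, ind; simpl; destruct excluded_middle_informative; lra. }
  revert a; induction l as [|[c d] r IH]; simpl; intros a H; [lra|].
  destruct H as [H1 [H2 H3]]; simpl in *.
  unfold inside at 1, ind; simpl. destruct excluded_middle_informative.
  - rewrite (before r d b H3) by lra. lra.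
  - specialize (IH d H3). lra.
Qed.

Lemma ov_not_contained (I J : R * R) (eps : R) :
  ~ subint I J -> lenI I <= eps -> 0 < eps ->
  ov I J <= eps * (inside (fst J) I + inside (snd J) I).
Proof.
  destruct I as [a b], J as [c d]. unfold lenI, inside; simpl. intros Hns Hle Heps.
  assert (Hcase : a < c \/ d < b).
  { destruct (Rle_dec c a), (Rle_dec b d); try lra.
    exfalso; apply Hns; intros t Ht; simpl in *; lra. }
  pose proof (ind_bounds (a < c < b)). pose proof (ind_bounds (a < d < b)).
  unfold ov; simpl.
  destruct (Rle_dec (Rmin b d - Rmax a c) 0) as [Hn|Hp].
  - rewrite Rmax_left by lra. apply Rmult_le_pos; lra.
  - rewrite Rmax_right by lra.
    pose proof (Rmin_l b d). pose proof (Rmin_r b d).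
    pose proof (Rmax_l a c). pose proof (Rmax_r a c).
    destruct Hcase as [Hac|Hdb].
    + rewrite (ind_true (a < c < b)) by lra. nra.
    + rewrite (ind_true (a < d < b)) by lra. nra.
Qed.

Lemma cumhigh_S (c : list nat -> nat -> R) (s : list nat) (x : nat) :
  cumhigh c s (S x) = cumhigh c s x + c s (S x).
Proof. unfold cumhigh. rewrite seq_S, map_app, sumR_app. simpl. ring. Qed.

Lemma intv_aux_snoc (c : list nat -> nat -> R) (pre r : list nat) (lo hi : R) (x : nat) :
  intv_aux c pre (r ++ [x]) lo hi =
  (fst (intv_aux c pre r lo hi) + lenI (intv_aux c pre r lo hi) * cumlow c (pre ++ r) x,
   fst (intv_aux c pre r lo hi) + lenI (intv_aux c pre r lo hi) * cumhigh c (pre ++ r) x).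
Proof.
  revert pre lo hi; induction r as [|a r IH]; intros pre lo hi; simpl.
  - rewrite app_nil_r. reflexivity.
  - rewrite IH, <- app_assoc. reflexivity.
Qed.

Lemma interval_snoc (c : list nat -> nat -> R) (w : list nat) (x : nat) :
  interval c (w ++ [x]) =
  (fst (interval c w) + lenI (interval c w) * cumlow c w x,
   fst (interval c w) + lenI (interval c w) * cumhigh c w x).
Proof. apply intv_aux_snoc. Qed.

Lemma words_alph (K m : nat) (w : list nat) : In w (words K m) -> in_alph K w.
Proof.
  revert w; induction m as [|m IH]; simpl; intros w Hw.
  - destruct Hw as [<-|[]]. intros y [].
  - apply in_flat_map in Hw. destruct Hw as [w0 [Hw0 Hw]].
    apply in_map_iff in Hw. destruct Hw as [x [<- Hx]].
    apply in_seq in Hx. intros y Hy. apply in_app_or in Hy.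
    destruct Hy as [Hy|[<-|[]]]; [apply (IH w0 Hw0 y Hy) | lia].
Qed.

Section Process.

Variables (K : nat) (P : list nat -> R) (c : list nat -> nat -> R).
Hypothesis HP : process K P c.

Lemma interval_length (w : list nat) :
  in_alph K w -> lenI (interval c w) = P w /\ 0 <= P w.
Proof.
  destruct HP as [H0 Hstep].
  induction w as [|x w IH] using rev_ind; intros Hw.
  - unfold interval, lenI; simpl. rewrite H0. lra.
  - assert (Hw' : in_alph K w) by (intros y Hy; apply Hw, in_or_app; auto).
    assert (Hx : (1 <= x <= K)%nat) by (apply Hw, in_or_app; right; simpl; auto).
    destruct (IH Hw') as [IH1 IH2].
    destruct (Hstep w Hw') as [Hc [_ Hchain]].
    rewrite (Hchain x Hx), interval_snoc. unfold lenI at 1; simpl.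
    destruct x as [|x]; [lia|]. unfold cumlow.
    replace (S x - 1)%nat with x by lia. fold (cumhigh c w x).
    rewrite cumhigh_S, IH1. split; [ring|].
    apply Rmult_le_pos; auto.
Qed.

Lemma children_tile (w : list nat) :
  in_alph K w ->
  tiles (map (fun x => interval c (w ++ [x])) (seq 1 K))
        (fst (interval c w)) (snd (interval c w)).
Proof.
  intros Hw. destruct (interval_length w Hw) as [Hl Hp].
  destruct HP as [_ Hstep]. destruct (Hstep w Hw) as [Hc [Hs _]].
  set (lo := fst (interval c w)). set (L := lenI (interval c w)).
  assert (HL : 0 <= L) by (unfold L; lra).
  assert (partial : forall k j, (j + k <= K)%nat ->
    tiles (map (fun x => interval c (w ++ [x])) (seq (S j) k))
          (lo + L * cumhigh c w j) (lo + L * cumhigh c w (j + k))).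
  { induction k as [|k IH]; intros j Hjk.
    - simpl. rewrite Nat.add_0_r. reflexivity.
    - cbn [seq map tiles]. rewrite interval_snoc; cbn [fst snd]. fold lo L.
      unfold cumlow. replace (S j - 1)%nat with j by lia. fold (cumhigh c w j).
      split; [reflexivity | split].
      + rewrite cumhigh_S. assert (0 <= c w (S j)) by (apply Hc; lia).
        assert (0 <= L * c w (S j)) by (apply Rmult_le_pos; lra). lra.
      + rewrite Nat.add_succ_r. apply (IH (S j)). lia. }
  pose proof (partial K 0%nat (le_n _)) as T. rewrite Nat.add_0_l in T.
  fold (cumhigh c w K) in Hs. rewrite Hs in T.
  replace (lo + L * cumhigh c w 0) with lo in T by (unfold cumhigh; simpl; ring).
  replace (lo + L * 1) with (snd (interval c w)) in T by (unfold lo, L, lenI; ring).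
  exact T.
Qed.

Lemma words_tile (m : nat) : tiles (map (interval c) (words K m)) 0 1.
Proof.
  induction m as [|m IH]; simpl.
  - unfold interval; simpl. repeat split; lra.
  - rewrite flat_map_concat_map, concat_map, map_map, <- flat_map_concat_map.
    apply tiles_flat with (F := interval c); [exact IH|].
    intros w Hw. rewrite map_map. apply children_tile. eapply words_alph; eauto.
Qed.

Lemma interval_in_unit (m : nat) (w : list nat) :
  In w (words K m) ->
  0 <= fst (interval c w) /\ fst (interval c w) <= snd (interval c w)
  /\ snd (interval c w) <= 1.
Proof. intros Hw. apply (tiles_in _ _ _ _ (words_tile m)), in_map, Hw. Qed.

Lemma total_mass (m : nat) : sumR (map P (words K m)) = 1.
Proof.
  rewrite <- (Rminus_0_r 1), <- (tiles_sum _ _ _ (words_tile m)), map_map.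
  apply sumR_ext. intros w Hw. symmetry. apply interval_length, (words_alph _ m), Hw.
Qed.

End Process.

Lemma ln2_pos : 0 < ln 2.
Proof. rewrite <- ln_1. apply ln_increasing; lra. Qed.

Lemma Rpower2_log2 (q : R) : 0 < q -> Rpower 2 (log2 q) = q.
Proof.
  intros Hq. pose proof ln2_pos. unfold Rpower, log2.
  replace (ln q / ln 2 * ln 2) with (ln q) by (field; lra). apply exp_ln, Hq.
Qed.

Lemma small_of_log (p lam : R) : 0 < p -> log2 (1 / p) >= lam -> p <= Rpower 2 (- lam).
Proof.
  intros Hp H. rewrite Rpower_Ropp.
  assert (Hle : Rpower 2 lam <= Rpower 2 (log2 (1 / p))) by (apply Rle_Rpower; lra).
  rewrite Rpower2_log2 in Hle by (apply Rdiv_lt_0_compat; lra).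
  replace p with (/ (1 / p)) by (field; lra).
  apply Rinv_le_contravar; [unfold Rpower; apply exp_pos | exact Hle].
Qed.

Lemma large_of_log (p tau : R) : 0 < p -> log2 (1 / p) <= tau -> 1 <= Rpower 2 tau * p.
Proof.
  intros Hp H.
  assert (Hle : Rpower 2 (log2 (1 / p)) <= Rpower 2 tau) by (apply Rle_Rpower; lra).
  rewrite Rpower2_log2 in Hle by (apply Rdiv_lt_0_compat; lra).
  apply Rmult_le_compat_r with (r := p) in Hle; [|lra].
  replace (1 / p * p) with 1 in Hle by (field; lra). exact Hle.
Qed.

Section IntervalAlgorithm.

Variables (M N n : nat) (PX : list nat -> R) (cX : list nat -> nat -> R)
          (PY : list nat -> R) (cY : list nat -> nat -> R).
Hypotheses (HX : process M PX cX) (HY : process N PY cY).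
Variables (m : nat) (eps : R).
Hypothesis Heps : 0 < eps.

Definition short_unstopped (x : list nat) : Prop :=
  (forall y, In y (words N n) -> ~ subint (interval cX x) (interval cY y))
  /\ lenI (interval cX x) <= eps.

Definition mass_over (y : list nat) : R :=
  sumR (map (fun x => ind (short_unstopped x) * ov (interval cX x) (interval cY y))
            (words M m)).

Lemma short_unstopped_mass :
  sumR (map (fun x => ind (short_unstopped x) * lenI (interval cX x)) (words M m))
  = sumR (map mass_over (words N n)).
Proof.
  unfold mass_over.
  rewrite <- (sumR_swap (fun x y => ind (short_unstopped x) * ov (interval cX x) (interval cY y))).
  apply sumR_ext. intros x Hx. rewrite sumR_scal, <- (map_map (interval cY)). f_equal.
  destruct (interval_in_unit _ _ _ HX m x Hx) as [? [? ?]].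
  symmetry. eapply ov_sum; [apply (words_tile _ _ _ HY n) | lra ..].
Qed.

Lemma mass_over_le_prob (y : list nat) : In y (words N n) -> mass_over y <= PY y.
Proof.
  intros Hy. unfold mass_over.
  destruct (interval_length _ _ _ HY y (words_alph _ _ _ Hy)) as [Hl _].
  destruct (interval_in_unit _ _ _ HY n y Hy) as [? [? ?]].
  rewrite <- Hl, <- (ov_sum _ _ _ _ (words_tile _ _ _ HX m)) by lra.
  rewrite map_map. apply sumR_le. intros x _. rewrite ov_sym.
  pose proof (ind_bounds (short_unstopped x)).
  pose proof (ov_ge0 (interval cY y) (interval cX x)). nra.
Qed.

(* The overlap with J_{y^n} is at most 2 eps: only the (at most two) tiles
   containing an endpoint of J_{y^n} contribute, each at most eps. *)
Lemma mass_over_le_2eps (y : list nat) : In y (words N n) -> mass_over y <= 2 * eps.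
Proof.
  intros Hy.
  set (lo := fst (interval cY y)). set (hi := snd (interval cY y)).
  assert (Hle : mass_over y <= sumR (map (fun x =>
      eps * (inside lo (interval cX x) + inside hi (interval cX x))) (words M m))).
  { apply sumR_le. intros x _.
    pose proof (ind_bounds (fst (interval cX x) < lo < snd (interval cX x))).
    pose proof (ind_bounds (fst (interval cX x) < hi < snd (interval cX x))).
    unfold ind at 1. destruct excluded_middle_informative as [[Hns Hshort]|].
    - rewrite Rmult_1_l. apply ov_not_contained; auto.
    - rewrite Rmult_0_l. apply Rmult_le_pos; unfold inside; lra. }
  rewrite sumR_scal, sumR_plus in Hle.
  pose proof (inside_le1 _ _ _ lo (words_tile _ _ _ HX m)) as Hlo.
  pose proof (inside_le1 _ _ _ hi (words_tile _ _ _ HX m)) as Hhi.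
  rewrite map_map in Hlo, Hhi. nra.
Qed.

(* If the algorithm has not stopped after x^m and x^m is in S_m(lam), then
   x^m is short and unstopped (or has probability zero). *)
Lemma unstopped_mass (lam : R) :
  Rpower 2 (- lam) <= eps ->
  prob M m PX (fun xm => ~ stopped cX cY N n xm)
  <= prob M m PX (fun xm => ~ S_set PX lam xm)
     + sumR (map (fun x => ind (short_unstopped x) * lenI (interval cX x)) (words M m)).
Proof.
  intros Hlam. unfold prob. rewrite <- sumR_plus. apply sumR_le. intros x Hx.
  destruct (interval_length _ _ _ HX x (words_alph _ _ _ Hx)) as [Hl Hp].
  pose proof (ind_bounds (short_unstopped x)).
  assert (0 <= ind (short_unstopped x) * lenI (interval cX x)) by (apply Rmult_le_pos; lra).
  destruct (excluded_middle_informative (~ stopped cX cY N n x)) as [Hns|Hs];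
    destruct (excluded_middle_informative (~ S_set PX lam x)) as [HnS|HS]; try lra.
  destruct (Req_dec (PX x) 0) as [Z|NZ]; [lra|].
  assert (Hshort : short_unstopped x).
  { split.
    - intros y Hy Hsub. apply Hns. exists (length x). split; [lia|].
      exists y. rewrite firstn_all. auto.
    - destruct (NNPP _ HS) as [Z|HS']; [contradiction|].
      pose proof (small_of_log (PX x) lam ltac:(lra) HS'). lra. }
  rewrite (ind_true _ Hshort). lra.
Qed.

(* Summing over y^n: sequences outside T_n(tau) contribute at most their
   probability, those inside at most 2 eps <= 2 eps 2^tau P(y^n). *)
Lemma short_unstopped_mass_bound (tau : R) :
  sumR (map mass_over (words N n))
  <= prob N n PY (fun yn => ~ T_set PY tau yn) + 2 * eps * Rpower 2 tau.
Proof.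
  unfold prob. rewrite <- (Rmult_1_r (2 * eps * Rpower 2 tau)).
  rewrite <- (total_mass _ _ _ HY n), <- sumR_scal, <- sumR_plus.
  apply sumR_le. intros y Hy.
  pose proof (interval_length _ _ _ HY y (words_alph _ _ _ Hy)) as [_ Hp].
  assert (0 < Rpower 2 tau) by (unfold Rpower; apply exp_pos).
  destruct excluded_middle_informative as [HnT|HT].
  - pose proof (mass_over_le_prob y Hy).
    assert (0 <= 2 * eps * Rpower 2 tau * PY y)
      by (apply Rmult_le_pos; [apply Rmult_le_pos|]; lra).
    lra.
  - destruct (NNPP _ HT) as [Hpos Hlog].
    pose proof (large_of_log _ _ Hpos Hlog). pose proof (mass_over_le_2eps y Hy).
    nra.
Qed.

End IntervalAlgorithm.

Theorem theorem2 (M N n : nat)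
  (PX : list nat -> R) (cX : list nat -> nat -> R)
  (PY : list nat -> R) (cY : list nat -> nat -> R)
  (HX : process M PX cX) (HY : process N PY cY)
  (m : nat) (lam tau : R) (Hlam : 0 <= lam) (Htau : 0 <= tau) :
  prob M m PX (fun xm => ~ stopped cX cY N n xm)
  <= prob M m PX (fun xm => ~ S_set PX lam xm)
     + prob N n PY (fun yn => ~ T_set PY tau yn)
     + Rpower 2 (- lam + tau + 1).
Proof.
  set (eps := Rpower 2 (- lam)).
  assert (Heps : 0 < eps) by (unfold eps, Rpower; apply exp_pos).
  assert (Hpow : Rpower 2 (- lam + tau + 1) = 2 * eps * Rpower 2 tau)
    by (unfold eps; rewrite !Rpower_plus, Rpower_1 by lra; ring).
  pose proof (unstopped_mass M N n PX cX cY HX m eps lam (Rle_refl _)) as Hunstopped.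
  rewrite (short_unstopped_mass M N n PX cX PY cY HX HY m eps) in Hunstopped.
  pose proof (short_unstopped_mass_bound M N n PX cX PY cY HX HY m eps Heps tau).
  rewrite Hpow. lra.
Qed.
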